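(* Let $A\subseteq B$ be an $m$-extension (under the standing assumptions below). Then for all $\theta,\zeta\in\mathrm{Con}(A)$: $[\theta,\zeta]_A=\Delta_A$ iff $[Cg_B(\theta),Cg_B(\zeta)]_B=\Delta_B$.
   Context: For an algebra $M$ of a fixed signature: $\mathrm{Con}(M)$ is its congruence lattice with bottom $\Delta_M$ and top $\nabla_M=M^2$; $Cg_M(X)$ is the congruence generated by $X\subseteq M^2$. $[\cdot,\cdot]_M$ is the term condition commutator: for $\alpha,\beta,\mu\in\mathrm{Con}(M)$, $C(\alpha,\beta;\mu)$ means that for all $n,k$, every $(n+k)$-ary term $t$, all $(a_i,b_i)\in\alpha$ and $(c_j,d_j)\in\beta$: $(t(\bar a,\bar c),t(\bar a,\bar d))\in\mu$ iff $(t(\bar b,\bar c),t(\bar b,\bar d))\in\mu$; $[\alpha,\beta]_M=\bigcap\{\mu: C(\alpha,\beta;\mu)\}$. A congruence $\phi\neq\nabla_M$ is prime if $[\alpha,\beta]_M\subseteq\phi$ implies $\alpha\subseteq\phi$ or $\beta\subseteq\phi$; $\mathrm{Spec}(M)$ is the set of primes, $\mathrm{Min}(M)$ its minimal elements; $\rho_M(\theta)$ is the intersection of all primes containing $\theta$ ($\nabla_M$ if none); $M$ is semiprime if $\rho_M(\Delta_M)=\Delta_M$. Standing assumptions: $B$ is an algebra, $A$ is a subalgebra of $B$, $A$ and $B$ are semiprime, and the commutators of $A$ and $B$ are commutative and distributive w.r.t. arbitrary joins (i.e. $[\alpha,\beta]=[\beta,\alpha]$ and $[\bigvee_i\alpha_i,\beta]=\bigvee_i[\alpha_i,\beta]$).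 The extension $A\subseteq B$ is an $m$-extension iff $\mu\cap\nabla_A\in\mathrm{Min}(A)$ for all $\mu\in\mathrm{Min}(B)$. *)

From mathcomp Require Import all_boot.
Set Implicit Arguments. Unset Strict Implicit. Unset Printing Implicit Defensive.

Section UA.
Variables (F : Type) (ar : F -> nat).

Definition ops (T : Type) := forall f : F, ('I_(ar f) -> T) -> T.
Arguments ops : clear implicits.

Definition relT (T : Type) := T -> T -> Prop.
Definition subrel {T} (r s : relT T) := forall x y, r x y -> s x y.
Definition releq {T} (r s : relT T) := forall x y, r x y <-> s x y.
Definition Delta (T : Type) : relT T := fun x y => x = y.
Definition Nabla (T : Type) : relT T := fun _ _ => True.

Section Alg.
Variables (T : Type) (op : ops T).

Definition is_con (th : relT T) :=
  [/\ (forall x, th x x), (forall x y, th x y -> th y x),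
      (forall x y z, th x y -> th y z -> th x z)
    & (forall f (a b : 'I_(ar f) -> T), (forall i, th (a i) (b i)) ->
         th (@op f a) (@op f b))].

Definition Cg (X : relT T) : relT T :=
  fun x y => forall th, is_con th -> subrel X th -> th x y.

Definition bigjoin (I : Type) (al : I -> relT T) : relT T :=
  Cg (fun x y => exists i, al i x y).

Inductive term (V : Type) : Type :=
| Var : V -> term V
| App : forall f : F, ('I_(ar f) -> term V) -> term V.

Fixpoint eval (V : Type) (env : V -> T) (t : term V) : T :=
  match t with
  | Var v => env v
  | App f args => @op f (fun i => eval env (args i))
  end.

Definition env2 n k (a : 'I_n -> T) (c : 'I_k -> T) : 'I_n + 'I_k -> T :=
  fun v => match v with inl i => a i | inr j => c j end.

Definition TC (al be mu : relT T) :=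
  forall (n k : nat) (t : term ('I_n + 'I_k)) (a b : 'I_n -> T) (c d : 'I_k -> T),
    (forall i, al (a i) (b i)) -> (forall j, be (c j) (d j)) ->
    (mu (eval (env2 a c) t) (eval (env2 a d) t) <->
     mu (eval (env2 b c) t) (eval (env2 b d) t)).

Definition comm (al be : relT T) : relT T :=
  fun x y => forall mu, is_con mu -> TC al be mu -> mu x y.

Definition prime (phi : relT T) :=
  [/\ is_con phi, ~ releq phi (@Nabla T)
    & forall al be, is_con al -> is_con be ->
        subrel (comm al be) phi -> subrel al phi \/ subrel be phi].

Definition minprime (phi : relT T) :=
  prime phi /\ forall psi, prime psi -> subrel psi phi -> releq psi phi.

Definition rho (th : relT T) : relT T :=
  fun x y => forall phi, prime phi -> subrel th phi -> phi x y.

Definition semiprime := releq (rho (@Delta T)) (@Delta T).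

Definition comm_commutative :=
  forall al be, is_con al -> is_con be -> releq (comm al be) (comm be al).

Definition comm_distributive :=
  forall (I : Type) (al : I -> relT T) be,
    (forall i, is_con (al i)) -> is_con be ->
    releq (comm (bigjoin al) be) (bigjoin (fun i => comm (al i) be)).
End Alg.

Definition sub_closed (B : Type) (opB : ops B) (S : B -> Prop) :=
  forall f (a : 'I_(ar f) -> B), (forall i, S (a i)) -> S (opB f a).

Definition subop (B : Type) (opB : ops B) (S : B -> Prop)
  (HS : sub_closed opB S) : ops {x : B | S x} :=
  fun f a => exist S (opB f (fun i => proj1_sig (a i)))
                     (HS f _ (fun i => proj2_sig (a i))).

Definition img (B : Type) (S : B -> Prop) (th : relT {x : B | S x}) : relT B :=
  fun x y => exists (x' y' : {x : B | S x}),
    th x' y' /\ x = proj1_sig x' /\ y = proj1_sig y'.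

Definition restr (B : Type) (S : B -> Prop) (mu : relT B) : relT {x : B | S x} :=
  fun x y => mu (proj1_sig x) (proj1_sig y).

Definition m_extension (B : Type) (opB : ops B) (S : B -> Prop)
  (HS : sub_closed opB S) :=
  forall mu, minprime opB mu -> minprime (subop HS) (@restr B S mu).
End UA.

(* The proof that
   [θ,ζ]_A = Δ_A  iff  [Cg_B θ, Cg_B ζ]_B = Δ_B  rests on three facts.
   1. In any algebra, [α,β] ⊆ α ∩ β, so α ∩ β = Δ forces [α,β] = Δ; in a
      semiprime algebra the converse holds too, since α ∩ β lies in every
      prime containing [α,β] and the primes intersect to Δ.  Hence, in a
      semiprime algebra, "[α,β] = Δ" just says "α ∩ β = Δ".
   2. Every prime congruence contains a minimal prime (Zorn's lemma: the
      intersection of a chain of primes is prime).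
   3. If [θ,ζ]_A = Δ_A and μ is a minimal prime of B, then μ ∩ ∇_A is a
      prime of A (m-extension) containing [θ,ζ]_A, so it contains θ or ζ,
      and then μ contains Cg_B θ or Cg_B ζ.
   By 2 and 3, Cg_B θ ∩ Cg_B ζ lies in every prime of B, hence is Δ_B.
   Conversely θ ∩ ζ embeds into Cg_B θ ∩ Cg_B ζ.  Fact 1 turns both
   statements about intersections into the statements about commutators. *)
From mathcomp Require Import all_boot.
From mathcomp Require Import boolp classical_sets.
Set Implicit Arguments. Unset Strict Implicit. Unset Printing Implicit Defensive.

Section Congruences.
Variables (F : Type) (ar : F -> nat) (T : Type) (op : ops ar T).

Definition disjoint_rel (al be : relT T) := forall x y, al x y -> be x y -> x = y.

Lemma eval_con (th : relT T) (V : Type) (e1 e2 : V -> T) (t : term ar V) :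
  is_con op th -> (forall v, th (e1 v) (e2 v)) ->
  th (eval op e1 t) (eval op e2 t).
Proof.
move=> [_ _ _ compat] e12; elim: t => [v|f args IH] /=; first exact: e12.
by apply: compat => i; apply: IH.
Qed.

Lemma inter_con (P : relT T -> Prop) : (forall p, P p -> is_con op p) ->
  is_con op (fun x y => forall p, P p -> p x y).
Proof.
move=> Pcon; split.
- by move=> x p /Pcon [].
- by move=> x y xy p Pp; case: (Pcon p Pp) => _ sym _ _; exact: sym (xy _ Pp).
- by move=> x y z xy yz p Pp; case: (Pcon p Pp) => _ _ tr _; exact: tr (xy _ Pp) (yz _ Pp).
- by move=> f a b ab p Pp; case: (Pcon p Pp) => _ _ _ compat; apply: compat => i; apply: ab.
Qed.

Lemma Cg_con (X : relT T) : is_con op (Cg op X).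
Proof.
split.
- by move=> x th [refl _ _ _] _; apply: refl.
- by move=> x y xy th thC HX; case: (thC) => _ sym _ _; exact: sym (xy _ thC HX).
- by move=> x y z xy yz th thC HX; case: (thC) => _ _ tr _; exact: tr (xy _ thC HX) (yz _ thC HX).
- by move=> f a b ab th thC HX; case: (thC) => _ _ _ compat; apply: compat => i; apply: ab.
Qed.

Lemma Cg_sub (X : relT T) : subrel X (Cg op X).
Proof. by move=> x y Xxy th _ HX; apply: HX. Qed.

Lemma comm_subl (al be : relT T) :
  is_con op al -> is_con op be -> subrel (comm op al be) al.
Proof.
move=> alC beC x y /(_ al alC); apply => n k t a b c d ab cd.
have move_a e : al (eval op (env2 a e) t) (eval op (env2 b e) t).
  by apply: eval_con => // -[i|j] /=; [exact: ab | case: alC].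
case: alC => _ sym tr _; split => H.
- exact: tr (sym _ _ (move_a c)) (tr _ _ _ H (move_a d)).
- exact: tr (move_a c) (tr _ _ _ H (sym _ _ (move_a d))).
Qed.

Lemma comm_subr (al be : relT T) :
  is_con op al -> is_con op be -> subrel (comm op al be) be.
Proof.
move=> alC beC x y /(_ be beC); apply => n k t a b c d ab cd.
have move_c a' : be (eval op (env2 a' c) t) (eval op (env2 a' d) t).
  by apply: eval_con => // -[i|j] /=; [case: beC | exact: cd].
by split => _; apply: move_c.
Qed.

Lemma Delta_sub_comm (al be : relT T) : subrel (@Delta T) (comm op al be).
Proof. by move=> x y -> mu [refl _ _ _] _; apply: refl. Qed.

Lemma comm_trivial_of_disjoint (al be : relT T) :
  is_con op al -> is_con op be -> disjoint_rel al be ->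
  releq (comm op al be) (@Delta T).
Proof.
move=> alC beC dis x y; split; last exact: Delta_sub_comm.
by move=> c; apply: dis; [exact: comm_subl c | exact: comm_subr c].
Qed.

(* In a semiprime algebra, congruences with trivial commutator are disjoint:
   any prime contains the commutator, hence one of the two congruences. *)
Lemma disjoint_of_comm_trivial (al be : relT T) : semiprime op ->
  is_con op al -> is_con op be -> releq (comm op al be) (@Delta T) ->
  disjoint_rel al be.
Proof.
move=> sp alC beC triv x y al_xy be_xy; apply/sp => phi [phiC _ phi_prime] _.
have comm_phi : subrel (comm op al be) phi.
  by move=> u v /triv ->; case: phiC.
by case: (phi_prime al be alC beC comm_phi) => sub; [exact: sub al_xy | exact: sub be_xy].
Qed.

Lemma not_subrel_inter (P : relT T -> Prop) (al : relT T) :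
  ~ subrel al (fun x y => forall p, P p -> p x y) ->
  exists p, P p /\ ~ subrel al p.
Proof.
move=> Nsub; apply: contrapT => Nex; apply: Nsub => x y al_xy p Pp.
apply: contrapT => Np; apply: Nex; exists p; split => // sub; exact/Np/sub.
Qed.

Lemma chain_inter_prime (P : relT T -> Prop) (p0 : relT T) : P p0 ->
  (forall p, P p -> prime op p) ->
  (forall p q, P p -> P q -> subrel p q \/ subrel q p) ->
  prime op (fun x y => forall p, P p -> p x y).
Proof.
move=> Pp0 Pprime Ptot; split.
- by apply: inter_con => p /Pprime [].
- move=> full; case: (Pprime p0 Pp0) => _ p0_proper _; apply: p0_proper => x y.
  by split => // _; apply: (proj2 (full x y)).
move=> al be alC beC comm_sub; apply: contrapT => /not_orP[Nal Nbe].
have [p [Pp Np]] := not_subrel_inter Nal.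
have [q [Pq Nq]] := not_subrel_inter Nbe.
have [r [Pr rp rq]] : exists r, [/\ P r, subrel r p & subrel r q].
  case: (Ptot p q Pp Pq) => sub; [exists p | exists q]; split=> //; exact: sub.
case: (Pprime r Pr) => _ _ /(_ al be alC beC (fun x y c => comm_sub x y c r Pr)).
by case=> sub; [apply: Np | apply: Nq] => x y /sub; [exact: rp | exact: rq].
Qed.

Lemma exists_minprime (phi0 : relT T) : prime op phi0 ->
  exists mu, minprime op mu /\ subrel mu phi0.
Proof.
move=> phi0P.
pose Ty := {p : relT T | prime op p /\ subrel p phi0}.
pose R : rel Ty := fun s t => `[< subrel (sval t) (sval s) >].
have [|||m m_max] := @ZL_preorder Ty (exist _ phi0 (conj phi0P (fun _ _ h => h))) R.
- by move=> t; apply/asboolP.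
- by move=> r s t /asboolP rs /asboolP st; apply/asboolP => x y /st /rs.
- move=> A Atot.
  pose Pm p := p = phi0 \/ exists s, A s /\ sval s = p.
  have Pm_prime p : Pm p -> prime op p /\ subrel p phi0.
    by case=> [->|[s [_ <-]]]; [split | exact: (svalP s)].
  have Pm_tot p q : Pm p -> Pm q -> subrel p q \/ subrel q p.
    move=> Pp Pq; case: (Pp) (Pq) => [->|[s [As <-]]]; first by right; case: (Pm_prime q Pq).
    case=> [->|[t [At <-]]]; first by left; case: (svalP s).
    by case: (Atot s t As At) => /asboolP; [right | left].
  have interP := chain_inter_prime (or_introl erefl) (fun p Pp => proj1 (Pm_prime p Pp)) Pm_tot.
  have inter_sub : subrel (fun x y => forall p, Pm p -> p x y) phi0 by move=> x y; apply; left.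
  exists (exist _ (fun x y => forall p, Pm p -> p x y) (conj interP inter_sub)) => s As; apply/asboolP => x y /= H.
  by apply: H; right; exists s.
- case: (svalP m) => mP m_sub; exists (sval m); split => //; split => // psi psiP psi_sub.
  have psi_phi0 : subrel psi phi0 by move=> x y /psi_sub /m_sub.
  have /asboolP m_psi := m_max (exist _ psi (conj psiP psi_phi0)) (asboolT psi_sub).
  by move=> x y; split; [exact: psi_sub | exact: m_psi].
Qed.
End Congruences.

Section Extension.
Variables (F : Type) (ar : F -> nat) (B : Type) (opB : ops ar B).
Variables (S : B -> Prop) (HS : sub_closed opB S).
Let A := {x : B | S x}.
Let opA : ops ar A := subop HS.

Lemma Cg_img_sub (th : relT A) (mu : relT B) :
  is_con opB mu -> subrel th (restr mu) -> subrel (Cg opB (img th)) mu.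
Proof. by move=> muC th_mu x y; apply => // u v [x' [y' [th_xy [-> ->]]]]; exact: th_mu. Qed.

(* Key step: in an m-extension with [θ,ζ]_A = Δ_A, every minimal prime μ of
   B contains Cg_B θ or Cg_B ζ, because the prime μ ∩ ∇_A of A contains
   [θ,ζ]_A and hence θ or ζ. *)
Lemma minprime_contains_Cg_img (th ze : relT A) (mu : relT B) :
  m_extension HS -> is_con opA th -> is_con opA ze ->
  releq (comm opA th ze) (@Delta A) -> minprime opB mu ->
  subrel (Cg opB (img th)) mu \/ subrel (Cg opB (img ze)) mu.
Proof.
move=> mext thC zeC triv mu_min.
have [[muC _ _] _] := mu_min.
have [[_ _ restr_prime] _] := mext mu mu_min.
have comm_restr : subrel (comm opA th ze) (restr mu).
  by move=> u v /triv; rewrite /Delta => ->; case: muC => refl _ _ _; apply: refl.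
by case: (restr_prime th ze thC zeC comm_restr) => sub; [left | right]; exact: Cg_img_sub.
Qed.

(* Over a semiprime B, annihilating congruences of A generate disjoint
   congruences of B: their intersection lies in every prime of B. *)
Lemma disjoint_Cg_img (th ze : relT A) :
  semiprime opB -> m_extension HS -> is_con opA th -> is_con opA ze ->
  releq (comm opA th ze) (@Delta A) ->
  disjoint_rel (Cg opB (img th)) (Cg opB (img ze)).
Proof.
move=> spB mext thC zeC triv x y th_xy ze_xy; apply/spB => phi phiP _.
have [mu [mu_min mu_phi]] := exists_minprime phiP.
by case: (minprime_contains_Cg_img mext thC zeC triv mu_min) => sub; apply: mu_phi;
  [exact: sub th_xy | exact: sub ze_xy].
Qed.

Lemma disjoint_of_Cg_img (th ze : relT A) :
  disjoint_rel (Cg opB (img th)) (Cg opB (img ze)) -> disjoint_rel th ze.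
Proof.
move=> dis [x Sx] [y Sy] th_xy ze_xy.
have img_sub (al : relT A) : al (exist S x Sx) (exist S y Sy) -> Cg opB (img al) x y.
  by move=> al_xy; apply: Cg_sub; exists (exist S x Sx), (exist S y Sy).
by apply: eq_exist; apply: dis; apply: img_sub.
Qed.
End Extension.

Theorem mainTheorem15 (F : Type) (ar : F -> nat) (B : Type) (opB : ops ar B)
  (S : B -> Prop) (HS : sub_closed opB S) :
  semiprime (subop HS) -> semiprime opB ->
  comm_commutative (subop HS) -> comm_distributive (subop HS) ->
  comm_commutative opB -> comm_distributive opB ->
  m_extension HS ->
  forall theta zeta : relT {x : B | S x},
    is_con (subop HS) theta -> is_con (subop HS) zeta ->
    (releq (comm (subop HS) theta zeta) (@Delta _) <->
     releq (comm opB (Cg opB (img theta)) (Cg opB (img zeta))) (@Delta B)).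
Proof.
move=> _ spB _ _ _ _ mext theta zeta thetaC zetaC; split => triv.
- apply: comm_trivial_of_disjoint; [exact: Cg_con | exact: Cg_con |].
  exact: disjoint_Cg_img.
- apply: comm_trivial_of_disjoint => //; apply: disjoint_of_Cg_img.
  by apply: (disjoint_of_comm_trivial spB) => //; exact: Cg_con.
Qed.
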